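(* Let ${\bm X}^\star={\bm V}^\star{\bm\Sigma}^\star{\bm V}^{\star\top}\in\mathbb{R}^{d\times d}$ where ${\bm V}^\star\in\mathbb{R}^{d\times r}$ has orthonormal columns and ${\bm\Sigma}^\star$ is an $r\times r$ diagonal matrix with positive diagonal entries. Let ${\bm V}_t\in\mathbb{R}^{d\times r}$ have orthonormal columns, let ${\bm U}_t\in\mathbb{R}^{d\times r'}$, and let ${\bm S}_t={\bm V}_t{\bm V}_t^\top{\bm U}_t$. If $\|{\bm V}^\star-{\bm V}_t\|\le0.1$, then $$\big\|({\bm X}^\star-{\bm S}_t{\bm S}_t^\top){\bm V}_t\big\|_{\mathrm F}^2\ge\frac25\big\|{\bm X}^\star-{\bm S}_t{\bm S}_t^\top\big\|_{\mathrm F}^2.$$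
   Context: $\|\cdot\|$ denotes the spectral norm and $\|\cdot\|_{\mathrm F}$ the Frobenius norm. (In the paper, ${\bm U}_t$ is a gradient descent iterate and ${\bm V}_t$ an associated orthonormal matrix; the lemma uses only the stated properties.) *)

From HB Require Import structures.
From mathcomp Require Import all_boot all_order all_algebra.
From mathcomp Require Import boolp classical_sets reals.
Set Implicit Arguments. Unset Strict Implicit. Unset Printing Implicit Defensive.
Import Order.TTheory GRing.Theory Num.Theory.
Local Open Scope ring_scope.
Local Open Scope classical_set_scope.

Definition frobnorm {R : realType} {m n : nat} (A : 'M[R]_(m, n)) : R :=
  Num.sqrt (\sum_(i < m) \sum_(j < n) A i j ^+ 2).

Definition vnorm {R : realType} {n : nat} (x : 'cV[R]_n) : R :=
  Num.sqrt (\sum_(i < n) x i 0 ^+ 2).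

Definition specnorm {R : realType} {m n : nat} (A : 'M[R]_(m, n)) : R :=
  sup [set vnorm (A *m x) | x in [set x : 'cV[R]_n | vnorm x <= 1]].

From HB Require Import structures.
From mathcomp Require Import all_boot all_order all_algebra.
From mathcomp Require Import boolp classical_sets reals.
From mathcomp Require Import lra.
(* Let P project onto the columns of Vt and Q = 1 - P. Since St = P Ut, the error
   M = X* - St St^T is symmetric with M Q = X* Q, so in block form
     ||M Vt||^2 = ||PMP||^2 + ||PX*Q||^2,
     ||M||^2   = ||PMP||^2 + 2 ||PX*Q||^2 + ||QX*Q||^2.
   As Q kills Vt, Q V* = Q (V* - Vt), whence ||QX*Q|| <= 0.1 ||X*Q|| and
   ||QX*Q||^2 <= ||PX*Q||^2 / 99, which leaves room for the ratio 2/5. *)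

Set Implicit Arguments. Unset Strict Implicit. Unset Printing Implicit Defensive.
Import Order.TTheory GRing.Theory Num.Theory.
Local Open Scope ring_scope.

Section FrobeniusNorm.
Variable R : realType.
Implicit Types (m n k : nat).

Lemma frobnorm_ge0 m n (A : 'M[R]_(m, n)) : 0 <= frobnorm A.
Proof. exact: sqrtr_ge0. Qed.

Lemma sqr_frobnorm_tr m n (A : 'M[R]_(m, n)) : frobnorm A ^+ 2 = \tr (A^T *m A).
Proof.
rewrite /frobnorm sqr_sqrtr; last first.
  by apply: sumr_ge0 => i _; apply: sumr_ge0 => j _; exact: sqr_ge0.
rewrite /mxtrace exchange_big; apply: eq_bigr => j _; rewrite !mxE.
by apply: eq_bigr => i _; rewrite !mxE expr2.
Qed.

Lemma frobnorm_trmx m n (A : 'M[R]_(m, n)) : frobnorm A^T = frobnorm A.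
Proof.
rewrite /frobnorm exchange_big; congr Num.sqrt.
by apply: eq_bigr => j _; apply: eq_bigr => i _; rewrite mxE.
Qed.

Lemma frobnorm_isometryl m n k (V : 'M[R]_(m, k)) (A : 'M[R]_(k, n)) :
  V^T *m V = 1%:M -> frobnorm (V *m A) = frobnorm A.
Proof.
move=> VtV; apply/eqP; rewrite -(eqrXn2 (n := 2)) ?frobnorm_ge0 //.
by rewrite !sqr_frobnorm_tr trmx_mul mulmxA -(mulmxA A^T) VtV mulmx1.
Qed.

Lemma frobnorm_isometryr m n k (V : 'M[R]_(m, k)) (A : 'M[R]_(n, k)) :
  V^T *m V = 1%:M -> frobnorm (A *m V^T) = frobnorm A.
Proof.
by move=> VtV; rewrite -frobnorm_trmx trmx_mul trmxK frobnorm_isometryl ?frobnorm_trmx.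
Qed.

Lemma sqr_frobnorm_projl m n (P : 'M[R]_m) (A : 'M[R]_(m, n)) :
  P^T = P -> P *m P = P ->
  frobnorm A ^+ 2 = frobnorm (P *m A) ^+ 2 + frobnorm ((1%:M - P) *m A) ^+ 2.
Proof.
move=> PT PP.
have QQ : (1%:M - P) *m (1%:M - P) = 1%:M - P.
  by rewrite mulmxBl mul1mx mulmxBr mulmx1 PP subrr subr0.
rewrite !sqr_frobnorm_tr -mxtraceD !trmx_mul raddfB /= trmx1 PT !mulmxA.
rewrite -(mulmxA _ P P) PP -(mulmxA _ (1%:M - P) (1%:M - P)) QQ -mulmxDl -mulmxDr.
by rewrite addrC subrK mulmx1.
Qed.

Lemma sqr_frobnorm_projr m n (P : 'M[R]_n) (A : 'M[R]_(m, n)) :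
  P^T = P -> P *m P = P ->
  frobnorm A ^+ 2 = frobnorm (A *m P) ^+ 2 + frobnorm (A *m (1%:M - P)) ^+ 2.
Proof.
move=> PT PP; rewrite -frobnorm_trmx (sqr_frobnorm_projl A^T PT PP).
rewrite -(frobnorm_trmx (A *m P)) -(frobnorm_trmx (A *m _)).
by rewrite !trmx_mul PT raddfB /= trmx1 PT.
Qed.

Lemma sqr_frobnorm_mulmx_proj m (P M : 'M[R]_m) :
  P^T = P -> P *m P = P -> M^T = M ->
  frobnorm (M *m P) ^+ 2
    = frobnorm (P *m M *m P) ^+ 2 + frobnorm (P *m M *m (1%:M - P)) ^+ 2.
Proof.
move=> PT PP MT; rewrite (sqr_frobnorm_projl (M *m P) PT PP) !mulmxA.
rewrite -[frobnorm ((1%:M - P) *m _ *m _)]frobnorm_trmx !trmx_mul PT MT.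
by rewrite raddfB /= trmx1 PT mulmxA.
Qed.

Lemma sqr_frobnorm_sym_blocks m (P M : 'M[R]_m) :
  P^T = P -> P *m P = P -> M^T = M ->
  frobnorm M ^+ 2 = frobnorm (P *m M *m P) ^+ 2
    + 2 * frobnorm (P *m M *m (1%:M - P)) ^+ 2
    + frobnorm ((1%:M - P) *m M *m (1%:M - P)) ^+ 2.
Proof.
move=> PT PP MT; rewrite (sqr_frobnorm_projr M PT PP) (sqr_frobnorm_mulmx_proj PT PP MT).
rewrite (sqr_frobnorm_projl (M *m (1%:M - P)) PT PP) !mulmxA.
lra.
Qed.

Lemma frobnorm_projC_le m n (P : 'M[R]_m) (A : 'M[R]_(m, n)) :
  P^T = P -> P *m P = P -> frobnorm ((1%:M - P) *m A) <= frobnorm A.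
Proof.
move=> PT PP; rewrite -(ler_pXn2r (n := 2)) ?nnegrE ?frobnorm_ge0 //.
by rewrite (sqr_frobnorm_projl A PT PP) lerDr sqr_ge0.
Qed.

Lemma sqr_frobnorm_col m n (A : 'M[R]_(m, n)) :
  frobnorm A ^+ 2 = \sum_j vnorm (col j A) ^+ 2.
Proof.
rewrite /frobnorm /vnorm sqr_sqrtr; last first.
  by apply: sumr_ge0 => i _; apply: sumr_ge0 => j _; exact: sqr_ge0.
rewrite exchange_big; apply: eq_bigr => j _; rewrite sqr_sqrtr; last first.
  by apply: sumr_ge0 => i _; exact: sqr_ge0.
by apply: eq_bigr => i _; rewrite mxE.
Qed.

End FrobeniusNorm.

Section VectorNorm.
Variables (R : realType) (n : nat).
Implicit Types (x : 'cV[R]_n).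

Lemma vnorm_ge0 x : 0 <= vnorm x.
Proof. exact: sqrtr_ge0. Qed.

Lemma sqr_vnorm x : vnorm x ^+ 2 = \sum_i x i 0 ^+ 2.
Proof. by rewrite sqr_sqrtr //; apply: sumr_ge0 => i _; exact: sqr_ge0. Qed.

Lemma vnorm_eq0 x : (vnorm x == 0) = (x == 0).
Proof.
apply/idP/eqP => [|->]; last first.
  by rewrite /vnorm big1 ?sqrtr0 // => i _; rewrite mxE expr0n.
rewrite -(eqrXn2 (n := 2)) ?vnorm_ge0 // sqr_vnorm expr0n /= => /eqP x0.
apply/matrixP => i j; rewrite ord1 [RHS]mxE.
by apply/eqP; rewrite -sqrf_eq0; apply/eqP/(psumr_eq0P _ x0) => // k _; exact: sqr_ge0.
Qed.

Lemma vnorm0 : vnorm (0 : 'cV[R]_n) = 0.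
Proof. by apply/eqP; rewrite vnorm_eq0. Qed.

Lemma vnormZ (a : R) x : vnorm (a *: x) = `|a| * vnorm x.
Proof.
rewrite /vnorm -sqrtr_sqr -sqrtrM ?sqr_ge0 // mulr_sumr.
by congr Num.sqrt; apply: eq_bigr => i _; rewrite mxE exprMn.
Qed.

Lemma vnorm_le1_entry x i : vnorm x <= 1 -> `|x i 0| <= 1.
Proof.
rewrite -(ler_pXn2r (n := 2)) ?nnegrE ?vnorm_ge0 // expr1n sqr_vnorm => x1.
rewrite -(ler_pXn2r (n := 2)) ?nnegrE // expr1n real_normK ?num_real //.
apply: le_trans x1; rewrite (bigD1 i) //= lerDl.
by apply: sumr_ge0 => k _; exact: sqr_ge0.
Qed.

End VectorNorm.

Section SpectralNorm.
Variables (R : realType) (m n : nat) (A : 'M[R]_(m, n)).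
Local Open Scope classical_set_scope.

Lemma has_sup_specnorm :
  has_sup [set vnorm (A *m x) | x in [set x : 'cV[R]_n | vnorm x <= 1]].
Proof.
split; first by exists (vnorm (A *m 0)), 0 => //=; rewrite vnorm0.
exists (Num.sqrt (\sum_i (\sum_j `|A i j|) ^+ 2)) => _ [x x1 <-].
rewrite /vnorm ler_sqrt; last by apply: sumr_ge0 => i _; exact: sqr_ge0.
apply: ler_sum => i _; rewrite mxE -real_normK ?num_real //.
rewrite lerXn2r ?nnegrE ?sumr_ge0 //.
apply: le_trans (ler_norm_sum _ _ _) _; apply: ler_sum => j _.
by rewrite normrM ler_piMr // vnorm_le1_entry.
Qed.

Lemma vnorm_mulmx_le_specnorm (x : 'cV[R]_n) :
  vnorm x <= 1 -> vnorm (A *m x) <= specnorm A.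
Proof. by move=> x1; apply: (sup_upper_bound has_sup_specnorm); exists x. Qed.

Lemma specnorm_ge0 : 0 <= specnorm A.
Proof.
apply: le_trans (vnorm_mulmx_le_specnorm (x := 0) _); first exact: vnorm_ge0.
by rewrite vnorm0.
Qed.

Lemma vnorm_mulmx_le (x : 'cV[R]_n) : vnorm (A *m x) <= specnorm A * vnorm x.
Proof.
have [->|x0] := eqVneq x 0.
  by rewrite mulmx0 !vnorm0 mulr0.
have t0 : 0 < vnorm x by rewrite lt_def vnorm_eq0 x0 vnorm_ge0.
have [y y1 ->] : exists2 y, vnorm y = 1 & x = vnorm x *: y.
  exists ((vnorm x)^-1 *: x); last by rewrite scalerA mulfV ?gt_eqF ?scale1r.
  by rewrite vnormZ gtr0_norm ?invr_gt0 // mulVf ?gt_eqF.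
rewrite -scalemxAr !vnormZ y1 mulr1 mulrC ler_wpM2r //.
by rewrite vnorm_mulmx_le_specnorm ?y1.
Qed.

Lemma frobnorm_mulmx_le p (W : 'M[R]_(n, p)) :
  frobnorm (A *m W) <= specnorm A * frobnorm W.
Proof.
rewrite -(ler_pXn2r (n := 2)) ?nnegrE ?mulr_ge0 ?specnorm_ge0 ?frobnorm_ge0 //.
rewrite exprMn !sqr_frobnorm_col mulr_sumr; apply: ler_sum => j _.
rewrite colE -mulmxA -colE -exprMn.
by rewrite ler_pXn2r ?nnegrE ?mulr_ge0 ?specnorm_ge0 ?vnorm_ge0 ?vnorm_mulmx_le.
Qed.

End SpectralNorm.

Definition oproj (R : pzSemiRingType) m k (V : 'M[R]_(m, k)) : 'M[R]_m := V *m V^T.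

Section OrthogonalProjector.
Variables (R : comPzRingType) (m k : nat) (V : 'M[R]_(m, k)).
Hypothesis VtV : V^T *m V = 1%:M.

Lemma oproj_sym : (oproj V)^T = oproj V.
Proof. by rewrite /oproj trmx_mul trmxK. Qed.

Lemma oproj_mulmx : oproj V *m V = V.
Proof. by rewrite /oproj -mulmxA VtV mulmx1. Qed.

Lemma oproj_idem : oproj V *m oproj V = oproj V.
Proof. by rewrite {1}/oproj mulmxA oproj_mulmx. Qed.

Lemma projC_mulmx : (1%:M - oproj V) *m V = 0.
Proof. by rewrite mulmxBl mul1mx oproj_mulmx subrr. Qed.

Lemma oproj_mulmx_projC : oproj V *m (1%:M - oproj V) = 0.
Proof. by rewrite mulmxBr mulmx1 oproj_idem subrr. Qed.

End OrthogonalProjector.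

Section OrthogonalProjectorNorm.
Variables (R : realType) (m k : nat) (V : 'M[R]_(m, k)).
Hypothesis VtV : V^T *m V = 1%:M.

Lemma frobnorm_mulmx_oproj n (A : 'M[R]_(n, m)) :
  frobnorm (A *m oproj V) = frobnorm (A *m V).
Proof. by rewrite /oproj mulmxA frobnorm_isometryr. Qed.

(* The complement of span [V] annihilates [V], so on the columns of [U] it only
   sees [U - V]. *)
Lemma frobnorm_projC_mulmx_le n (U : 'M[R]_(m, k)) (W : 'M[R]_(k, n)) :
  U^T *m U = 1%:M ->
  frobnorm ((1%:M - oproj V) *m (U *m W)) <= specnorm (U - V) * frobnorm (U *m W).
Proof.
move=> UtU; rewrite mulmxA (frobnorm_isometryl _ UtU).
have -> : (1%:M - oproj V) *m U = (1%:M - oproj V) *m (U - V).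
  by rewrite mulmxBr projC_mulmx // subr0.
rewrite -mulmxA; apply: le_trans (frobnorm_mulmx_le _ _).
exact: frobnorm_projC_le (oproj_sym V) (oproj_idem VtV).
Qed.

End OrthogonalProjectorNorm.

Theorem lemma9 (R : realType) (d r r' : nat)
  (Vstar : 'M[R]_(d, r)) (sigma : 'rV[R]_r)
  (Vt : 'M[R]_(d, r)) (Ut : 'M[R]_(d, r')) :
  Vstar^T *m Vstar = 1%:M ->
  (forall i, 0 < sigma 0 i) ->
  Vt^T *m Vt = 1%:M ->
  specnorm (Vstar - Vt) <= 1 / 10 ->
  let Xstar := Vstar *m diag_mx sigma *m Vstar^T in
  let St := Vt *m Vt^T *m Ut in
  frobnorm ((Xstar - St *m St^T) *m Vt) ^+ 2
    >= 2 / 5 * frobnorm (Xstar - St *m St^T) ^+ 2.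
Proof.
move=> VsV _ VtV dist /=; rewrite -[Vt *m Vt^T]/(oproj Vt).
have PT := oproj_sym Vt; have PP := oproj_idem VtV; have PQ := oproj_mulmx_projC VtV.
set P := oproj Vt in PT PP PQ *; set Q := 1%:M - P in PQ.
set X := Vstar *m _ *m _; set S := P *m Ut; set M := X - S *m S^T.
have XT : X^T = X by rewrite !trmx_mul trmxK tr_diag_mx mulmxA.
have MT : M^T = M by rewrite raddfB /= XT trmx_mul trmxK.
have MQ : M *m Q = X *m Q.
  have StQ : S^T *m Q = 0 by rewrite trmx_mul PT -mulmxA PQ mulmx0.
  by rewrite mulmxBl -(mulmxA S) StQ mulmx0 subr0.
have QXQ_le : frobnorm (Q *m X *m Q) <= 1 / 10 * frobnorm (X *m Q).
  have XQ : X *m Q = Vstar *m (diag_mx sigma *m Vstar^T *m Q) by rewrite !mulmxA.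
  rewrite -(mulmxA Q X Q) XQ.
  apply: le_trans (frobnorm_projC_mulmx_le VtV _ VsV) _.
  by rewrite ler_wpM2r ?frobnorm_ge0.
move: QXQ_le; rewrite -(ler_pXn2r (n := 2)) ?nnegrE ?mulr_ge0 ?invr_ge0 ?frobnorm_ge0 //.
rewrite exprMn -(mulmxA Q X Q) (sqr_frobnorm_projl (X *m Q) PT PP) -/Q -!MQ.
rewrite !(mulmxA _ M Q) -(frobnorm_mulmx_oproj VtV) -/P.
rewrite (sqr_frobnorm_mulmx_proj PT PP MT) (sqr_frobnorm_sym_blocks PT PP MT) -/Q.
have := sqr_ge0 (frobnorm (P *m M *m P)); have := sqr_ge0 (frobnorm (Q *m M *m Q)).
lra.
Qed.
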